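(* For every integer $n\ge2$, $$\int_0^{1-\frac{\log n}{n}}F_n(w)\,dw\le(2+\sqrt2)\,n.$$
   Context: For $w>0$ and integer $n\ge1$ let $a_n(w)=\sum_{j=0}^n w^j$, $b_n(w)=\sum_{j=1}^n jw^j$, $c_n(w)=\sum_{j=0}^n j^2w^j$, and $$F_n(w)=\frac{1}{2\sqrt{w}}\sqrt{\frac{c_n(w)}{a_n(w)}}\sqrt{\frac{a_n(w)c_n(w)-b_n(w)^2}{w\,a_n(w)^2}}.$$ $\log$ is the natural logarithm. *)

From Stdlib Require Import Reals Lra.
From Coquelicot Require Import Coquelicot.
Open Scope R_scope.

Definition a_n (n : nat) (w : R) : R := sum_f_R0 (fun j => w ^ j) n.
Definition b_n (n : nat) (w : R) : R := sum_f_R0 (fun j => INR j * w ^ j) n.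
Definition c_n (n : nat) (w : R) : R := sum_f_R0 (fun j => INR j ^ 2 * w ^ j) n.

Definition F_n (n : nat) (w : R) : R :=
  / (2 * sqrt w) * sqrt (c_n n w / a_n n w)
  * sqrt ((a_n n w * c_n n w - b_n n w ^ 2) / (w * a_n n w ^ 2)).

From Stdlib Require Import Reals Lra Lia Psatz.
From Coquelicot Require Import Coquelicot.
Open Scope R_scope.

(* Dropping the non-negative term b_n^2 in the second square
   root gives, for w > 0,  F_n(w) <= c_n(w) / (2 w a_n(w)).  The closed forms
   of the geometric sum a_n and of c_n yield, for 0 < w < 1,
   c_n(w) (1-w)^2 <= 2 w a_n(w), hence the pointwise bound
   F_n(w) <= 1 / (1-w)^2, whose primitive is 1/(1-w).  So for 0 <= X < 1,
   int_0^X F_n <= 1/(1-X) - 1.  With X = 1 - log n / n this is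
   n / log n - 1 <= 2 n, since log n >= log 2 > 1/2.
   Integrability: near w = 0 the factor 1/sqrt w of F_n is absorbed by
   c_n and b_n, which are divisible by w; the regularised expression [F_reg]
   below agrees with F_n on (0, oo) and is continuous on [0, oo).
   The file proves, in order: algebraic identities and bounds on the sums,
   the pointwise bound on F_n, continuity of [F_reg], the integral bound on
   [0, X], and finally the theorem. *)

Definition c_red (n : nat) (w : R) : R := sum_f_R0 (fun j => INR j ^ 2 * w ^ pred j) n.
Definition b_red (n : nat) (w : R) : R := sum_f_R0 (fun j => INR j * w ^ pred j) n.

Lemma c_n_factor n w : c_n n w = w * c_red n w.
Proof.
  induction n as [|n IH]; unfold c_n, c_red in *; cbn [sum_f_R0 pred].
  - simpl; ring.
  - rewrite IH; simpl; ring.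
Qed.

Lemma b_n_factor n w : b_n n w = w * b_red n w.
Proof.
  induction n as [|n IH]; unfold b_n, b_red in *; cbn [sum_f_R0 pred].
  - simpl; ring.
  - rewrite IH; simpl; ring.
Qed.

Lemma a_n_geometric n w : a_n n w - 1 = w * a_n n w - w ^ S n.
Proof. induction n as [|n IH]; unfold a_n in *; simpl in *; [ring | lra]. Qed.

Lemma c_n_closed_form n w :
  c_n n w * (1 - w) ^ 2 =
  2 * (a_n n w - 1) - w + w ^ S n * (INR n ^ 2 * w - INR n ^ 2 - 2 * INR n + 1).
Proof.
  induction n as [|n IH]; unfold c_n, a_n in *.
  - simpl; ring.
  - cbn [sum_f_R0]. rewrite Rmult_plus_distr_r, IH, S_INR. simpl; ring.
Qed.

Lemma a_n_ge1 n w : 0 <= w -> 1 <= a_n n w.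
Proof.
  intros Hw; induction n as [|n IH]; unfold a_n in *; simpl in *; [lra |].
  pose proof (pow_le w n Hw). nra.
Qed.

Lemma c_n_ge0 n w : 0 <= w -> 0 <= c_n n w.
Proof.
  intros Hw; induction n as [|n IH]; unfold c_n in *; cbn [sum_f_R0] in *; [simpl; lra |].
  apply Rplus_le_le_0_compat; [exact IH |].
  apply Rmult_le_pos; apply pow_le; [apply pos_INR | exact Hw].
Qed.

Lemma c_n_le_a_n n w : 0 < w < 1 -> c_n n w * (1 - w) ^ 2 <= 2 * w * a_n n w.
Proof.
  intros Hw. rewrite c_n_closed_form. pose proof (a_n_geometric n w) as Hgeo.
  assert (Hpos : 0 < w ^ n) by (apply pow_lt; lra).
  pose proof (pos_INR n).
  assert (Hk : INR n ^ 2 * w - INR n ^ 2 - 2 * INR n + 1 <= 1) by nra.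
  set (k := INR n ^ 2 * w - INR n ^ 2 - 2 * INR n + 1) in *.
  assert (w * w ^ n * k <= w * w ^ n) by (rewrite <- (Rmult_1_r (w * w ^ n)) at 2;
    apply Rmult_le_compat_l; [apply Rmult_le_pos |]; lra).
  simpl in *. nra.
Qed.

(* Dropping b_n^2 in the variance factor: F_n(w) <= c_n / (2 w a_n). *)
Lemma F_n_le_ratio n w : 0 < w -> F_n n w <= c_n n w / (2 * w * a_n n w).
Proof.
  intros Hw. unfold F_n.
  set (a := a_n n w); set (b := b_n n w); set (c := c_n n w).
  assert (Ha : 1 <= a) by (apply a_n_ge1; lra).
  assert (Hc : 0 <= c) by (apply c_n_ge0; lra).
  assert (Hsw : 0 < sqrt w) by (apply sqrt_lt_R0; lra).
  assert (Hca : 0 <= c / a) by (apply Rdiv_le_0_compat; lra).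
  assert (Hvar : sqrt ((a * c - b ^ 2) / (w * a ^ 2)) <= sqrt (c / a) * / sqrt w).
  { rewrite <- sqrt_inv, <- sqrt_mult_alt by exact Hca.
    apply sqrt_le_1_alt.
    replace (c / a * / w) with ((a * c) / (w * a ^ 2)) by (field; lra).
    apply Rmult_le_compat_r.
    - apply Rlt_le, Rinv_0_lt_compat, Rmult_lt_0_compat; [lra | apply pow_lt; lra].
    - pose proof (pow2_ge_0 b); lra. }
  eapply Rle_trans.
  { apply Rmult_le_compat_l; [| exact Hvar].
    apply Rmult_le_pos; [apply Rlt_le, Rinv_0_lt_compat; lra | apply sqrt_pos]. }
  replace (/ (2 * sqrt w) * sqrt (c / a) * (sqrt (c / a) * / sqrt w))
    with (sqrt (c / a) * sqrt (c / a) / (2 * (sqrt w * sqrt w))) by (field; lra).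
  rewrite !sqrt_sqrt by lra.
  right; field; lra.
Qed.

Lemma F_n_bound n w : 0 < w < 1 -> F_n n w <= / (1 - w) ^ 2.
Proof.
  intros Hw. eapply Rle_trans; [apply F_n_le_ratio; lra |].
  assert (Ha : 1 <= a_n n w) by (apply a_n_ge1; lra).
  assert (H1w : 0 < (1 - w) ^ 2) by (apply pow_lt; lra).
  apply (Rmult_le_reg_r ((1 - w) ^ 2 * (2 * w * a_n n w))); [apply Rmult_lt_0_compat; nra |].
  replace (c_n n w / (2 * w * a_n n w) * ((1 - w) ^ 2 * (2 * w * a_n n w)))
    with (c_n n w * (1 - w) ^ 2) by (field; lra).
  replace (/ (1 - w) ^ 2 * ((1 - w) ^ 2 * (2 * w * a_n n w)))
    with (2 * w * a_n n w) by (field; lra).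
  apply c_n_le_a_n; exact Hw.
Qed.

(* F_n with the factor w cancelled; continuous on [0, oo), equal to F_n on (0, oo). *)
Definition F_reg (n : nat) (w : R) : R :=
  / 2 * sqrt (c_red n w * / a_n n w)
  * sqrt ((a_n n w * c_red n w + - (w * b_red n w ^ 2)) * / a_n n w ^ 2).

Lemma F_reg_eq n w : 0 < w -> F_reg n w = F_n n w.
Proof.
  intros Hw. unfold F_n, F_reg. rewrite c_n_factor, b_n_factor.
  assert (Ha : 1 <= a_n n w) by (apply a_n_ge1; lra).
  assert (Hsw : 0 < sqrt w) by (apply sqrt_lt_R0; lra).
  replace (w * c_red n w / a_n n w) with (w * (c_red n w * / a_n n w)) by (field; lra).
  rewrite (sqrt_mult_alt w) by lra.
  replace ((a_n n w * (w * c_red n w) - (w * b_red n w) ^ 2) / (w * a_n n w ^ 2))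
    with ((a_n n w * c_red n w + - (w * b_red n w ^ 2)) * / a_n n w ^ 2) by (field; lra).
  field; lra.
Qed.

Lemma continuous_pow k x : continuous (fun w : R => w ^ k) x.
Proof.
  induction k as [|k IH]; simpl; [apply continuous_const |].
  apply (continuous_mult (fun w : R => w)); [apply continuous_id | exact IH].
Qed.

Lemma continuous_sum_f_R0 (f : nat -> R -> R) n x :
  (forall j, continuous (f j) x) -> continuous (fun w => sum_f_R0 (fun j => f j w) n) x.
Proof.
  intros Hf; induction n as [|n IH]; simpl; [apply Hf |].
  apply (continuous_plus (fun w => sum_f_R0 (fun j => f j w) n)); auto.
Qed.

Lemma continuous_monomial_sum (coef : nat -> R) (e : nat -> nat) n x :
  continuous (fun w => sum_f_R0 (fun j => coef j * w ^ e j) n) x.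
Proof.
  apply (continuous_sum_f_R0 (fun j w => coef j * w ^ e j)); intros j.
  apply (continuous_mult (fun _ => coef j)); [apply continuous_const | apply continuous_pow].
Qed.

Lemma continuous_a_n n x : continuous (a_n n) x.
Proof. apply (continuous_sum_f_R0 (fun j w => w ^ j)); intros; apply continuous_pow. Qed.

Lemma continuous_c_red n x : continuous (c_red n) x.
Proof. apply (continuous_monomial_sum (fun j => INR j ^ 2) pred). Qed.

Lemma continuous_b_red n x : continuous (b_red n) x.
Proof. apply (continuous_monomial_sum INR pred). Qed.

Lemma continuous_F_reg n x : 0 <= x -> continuous (F_reg n) x.
Proof.
  intros Hx. assert (Ha : a_n n x <> 0) by (pose proof (a_n_ge1 n x Hx); lra).
  pose proof (continuous_a_n n x) as Ca.
  pose proof (continuous_c_red n x) as Cc.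
  pose proof (continuous_b_red n x) as Cb.
  assert (Cinv : continuous (fun w => / a_n n w) x) by (apply continuous_Rinv_comp; auto).
  assert (Cinv2 : continuous (fun w => / a_n n w ^ 2) x).
  { apply (continuous_Rinv_comp (fun w => a_n n w ^ 2));
      [apply (continuous_comp (a_n n) (fun y => y ^ 2)); auto; apply continuous_pow
      | apply pow_nonzero; exact Ha]. }
  unfold F_reg.
  apply (continuous_mult (fun w => / 2 * sqrt (c_red n w * / a_n n w))).
  - apply (continuous_mult (fun _ => / 2)); [apply continuous_const |].
    apply continuous_sqrt_comp, (continuous_mult (c_red n)); auto.
  - apply continuous_sqrt_comp, (continuous_mult (fun w => a_n n w * c_red n w + - (w * b_red n w ^ 2))); auto.
    apply (continuous_plus (fun w => a_n n w * c_red n w)).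
    + apply (continuous_mult (a_n n)); auto.
    + apply (continuous_opp (fun w => w * b_red n w ^ 2)).
      apply (continuous_mult (fun w => w) (fun w => b_red n w ^ 2)); [apply continuous_id |].
      apply (continuous_comp (b_red n) (fun y => y ^ 2)); auto; apply continuous_pow.
Qed.

Lemma is_RInt_inv_sq X : 0 <= X < 1 ->
  is_RInt (fun w => / (1 - w) ^ 2) 0 X (/ (1 - X) - 1).
Proof.
  intros HX. replace (/ (1 - X) - 1) with (minus (/ (1 - X)) (/ (1 - 0)))
    by (unfold minus, plus, opp; simpl; field; lra).
  apply (is_RInt_derive (fun w => / (1 - w))).
  - intros x Hx. rewrite Rmin_left, Rmax_right in Hx by lra.
    auto_derive; [lra | field; lra].
  - intros x Hx. rewrite Rmin_left, Rmax_right in Hx by lra.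
    apply (ex_derive_continuous (K:=R_AbsRing) (V:=R_NormedModule)).
    auto_derive. replace ((1 + - x) * ((1 + - x) * 1)) with ((1 - x) ^ 2) by ring.
    apply pow_nonzero; lra.
Qed.

Lemma RInt_F_n_bound n X : 0 <= X < 1 ->
  ex_RInt (F_n n) 0 X /\ RInt (F_n n) 0 X <= / (1 - X) - 1.
Proof.
  intros HX. pose proof (is_RInt_inv_sq X HX) as Hprim.
  assert (HexF : ex_RInt (F_n n) 0 X).
  { apply (ex_RInt_ext (F_reg n)).
    - intros x Hx. rewrite Rmin_left in Hx by lra. apply F_reg_eq; lra.
    - apply (ex_RInt_continuous (V:=R_CompleteNormedModule)). intros z Hz.
      rewrite Rmin_left in Hz by lra. apply continuous_F_reg; lra. }
  split; [exact HexF |].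
  rewrite <- (is_RInt_unique _ _ _ _ Hprim).
  apply RInt_le; [lra | exact HexF | eexists; exact Hprim |].
  intros x Hx. apply F_n_bound; lra.
Qed.

Theorem lemma3p6 (n : nat) (hn : (2 <= n)%nat) :
  ex_RInt (F_n n) 0 (1 - ln (INR n) / INR n) /\
  RInt (F_n n) 0 (1 - ln (INR n) / INR n) <= (2 + sqrt 2) * INR n.
Proof.
  assert (Hn : 2 <= INR n) by (replace 2 with (INR 2) by (simpl; lra); apply le_INR; lia).
  assert (Hlog_half : / 2 < ln (INR n)) by (eapply Rlt_le_trans; [apply ln_lt_2 | apply ln_le; lra]).
  assert (Hlog_le : ln (INR n) <= INR n - 1).
  { pose proof (exp_ineq1_le (ln (INR n))) as He. rewrite exp_ln in He by lra. lra. }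
  assert (Hratio : 0 < ln (INR n) / INR n <= 1).
  { split; [apply Rdiv_lt_0_compat; lra |].
    apply (Rmult_le_reg_r (INR n)); [lra |]. field_simplify; lra. }
  destruct (RInt_F_n_bound n (1 - ln (INR n) / INR n)) as [Hex Hint]; [lra |].
  split; [exact Hex |].
  eapply Rle_trans; [exact Hint |].
  replace (/ (1 - (1 - ln (INR n) / INR n)) - 1) with (INR n / ln (INR n) - 1) by (field; lra).
  assert (INR n / ln (INR n) <= 2 * INR n).
  { apply (Rmult_le_reg_r (ln (INR n))); [lra |].
    replace (INR n / ln (INR n) * ln (INR n)) with (INR n) by (field; lra). nra. }
  pose proof (sqrt_pos 2). nra.
Qed.
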